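(* Let $E_1,\dots,E_m$ be mutually independent events on a probability space, let $p_i=\mathbf P(E_i)$, and assume $p_1\ge p_2\ge\dots\ge p_m$. Fix real numbers $0<a<b$ and define random variables $X_i=b$ on $E_i$ and $X_i=a$ on $E_i^c$. For a nonempty $\mathcal S\subseteq[m]$ define $$V(\mathcal S)=\mathbf E\Big[\ln\Big(\frac{1}{|\mathcal S|}\sum_{i\in\mathcal S}X_i\Big)\Big].$$ Then, for $1\le k\le m$, the set $[k]=\{1,\dots,k\}$ (the indices with the $k$ largest $p_i$) maximizes $V(\mathcal S)$ over all $\mathcal S\subseteq[m]$ with $|\mathcal S|=k$.
   Context: $V$ is the expected log-return of an equally weighted portfolio $\mathcal S$; a maximizer over $k$-element subsets is called a log-optimal portfolio. *)

From HB Require Import structures.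
From mathcomp Require Import all_boot all_order all_algebra.
From mathcomp Require Import all_classical all_reals all_analysis.
Set Implicit Arguments. Unset Strict Implicit. Unset Printing Implicit Defensive.
Import Order.TTheory GRing.Theory Num.Theory.
Local Open Scope classical_set_scope.
Local Open Scope ring_scope.

Definition mutually_independent {d} {T : measurableType d} {R : realType}
  (P : probability T R) (m : nat) (E : 'I_m -> set T) : Prop :=
  forall S : {set 'I_m},
    P (\big[setI/setT]_(i in S) E i) = (\prod_(i in S) P (E i))%E.

Definition Xrv {T : Type} {R : realType} (m : nat) (E : 'I_m -> set T)
  (a b : R) (i : 'I_m) : T -> R :=
  fun t => if `[< E i t >] then b else a.

Definition Vlog {d} {T : measurableType d} {R : realType}
  (P : probability T R) (m : nat) (E : 'I_m -> set T) (a b : R)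
  (S : {set 'I_m}) : \bar R :=
  'E_P[fun t => ln ((#|S|%:R)^-1 * \sum_(i in S) Xrv E a b i t)].

From HB Require Import structures.
From mathcomp Require Import all_boot all_order all_algebra.
From mathcomp Require Import all_classical all_reals all_analysis.
Import Order.TTheory GRing.Theory Num.Theory.
Local Open Scope classical_set_scope.
Local Open Scope ring_scope.

From mathcomp Require Import ring.
Set Implicit Arguments. Unset Strict Implicit. Unset Printing Implicit Defensive.

(* By independence, V(S) = E[f(N_S)], where N_S is the number of events of S
   that occur and f(n) = ln(a + n (b - a) / k) is nondecreasing.  Splitting
   S = {c} + S', this expectation is affine in p_c with slope
   E[f(N_S' + 1) - f(N_S')] >= 0, so replacing an index of S by one of larger
   probability cannot decrease V; finitely many such exchanges turn any k-set
   into [k]. *)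

Lemma big_powersetU1 (T : finType) (V : nmodType) (c : T) (S : {set T})
    (F : {set T} -> V) : c \notin S ->
  \sum_(B in powerset (c |: S)) F B = \sum_(B in powerset S) (F B + F (c |: B)).
Proof.
move=> cS; rewrite big_split [LHS](bigID (fun B : {set T} => c \notin B)) /=.
congr (_ + _).
  by apply: eq_bigl => B; rewrite !inE -subsetD1 setU1K.
rewrite (reindex_onto (fun B => c |: B) (fun B => B :\ c)) /=; last first.
  by move=> B /andP[_ /negPn cB]; rewrite finset.setD1K.
apply: eq_bigl => B; rewrite !inE eqxx /= andbT finset.subUset finset.sub1set setU11 /=.
have [cB|cB] := boolP (c \in B).
  rewrite [B \subset S](contraNF _ cS); last by move/fintype.subsetP; apply.
  by apply: contraTF cB => /andP[_ /eqP <-]; rewrite setD11.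
by rewrite setU1K // eqxx andbT -[in RHS](setU1K cS) subsetD1 cB andbT.
Qed.

Section CountExpectation.
Variables (R : comRingType) (I : finType) (p : I -> R) (f : nat -> R).

Definition outcome_weight (S B : {set I}) : R :=
  \prod_(i in B) p i * \prod_(i in S :\: B) (1 - p i).

Definition count_expect (S : {set I}) : R :=
  \sum_(B in powerset S) f #|B| * outcome_weight S B.

Lemma count_expectU1 (c : I) (S : {set I}) : c \notin S ->
  count_expect (c |: S) = \sum_(B in powerset S)
     outcome_weight S B * (f #|B| + p c * (f #|B|.+1 - f #|B|)).
Proof.
move=> cS; rewrite /count_expect big_powersetU1 //; apply: eq_bigr => B.
rewrite inE => sBS; have cB : c \notin B by apply: contraNN cS => /(fintype.subsetP sBS).
have BcS : (c |: S) :\: B = c |: (S :\: B).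
  by apply/setP => x; rewrite !inE; case: (eqVneq x c) => [->|] //=; rewrite cB.
have cBcS : (c |: S) :\: (c |: B) = S :\: B.
  apply/setP => x; rewrite !inE.
  by case: (eqVneq x c) => [->|] //=; rewrite (negbTE cS) andbF.
rewrite /outcome_weight cardsU1 cB BcS cBcS big_setU1 ?big_setU1 //=; last first.
  by rewrite inE negb_and cS orbT.
ring.
Qed.

End CountExpectation.

Section CountExpectationMonotone.
Variables (R : numDomainType) (I : finType) (p : I -> R) (f : nat -> R).
Hypothesis p01 : forall i, 0 <= p i <= 1.
Hypothesis f_nondecr : forall n, f n <= f n.+1.

Lemma outcome_weight_ge0 (S B : {set I}) : 0 <= outcome_weight p S B.
Proof.
by apply: mulr_ge0; apply: prodr_ge0 => i _; case/andP: (p01 i); rewrite // subr_ge0.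
Qed.

Lemma count_expect_exchange (i j : I) (S : {set I}) :
  i \notin S -> j \notin S -> p j <= p i ->
  count_expect p f (j |: S) <= count_expect p f (i |: S).
Proof.
move=> iS jS pji; rewrite !count_expectU1 //; apply: ler_sum => B _.
by rewrite ler_wpM2l ?outcome_weight_ge0 // lerD2l ler_wpM2r // subr_ge0.
Qed.

Lemma count_expect_le_top (K S : {set I}) :
  (forall i j, i \in K -> j \notin K -> p j <= p i) ->
  #|S| = #|K| -> count_expect p f S <= count_expect p f K.
Proof.
move=> pK; have [n] := ubnP #|S :\: K|; elim: n S => // n IH S ltSKn eqSK.
have [SK0|[j]] := set_0Vmem (S :\: K).
  have sSK : S \subset K by rewrite -finset.setD_eq0 SK0.
  suff -> : S = K by [].
  by apply/eqP; rewrite eqEcard sSK eqSK /=.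
rewrite inE => /andP[jK jS].
have [i] : exists i, i \in K :\: S.
  apply/set0Pn; rewrite -card_gt0 cardsD finset.setIC -eqSK -cardsD card_gt0.
  by apply/set0Pn; exists j; rewrite inE jK.
rewrite inE => /andP[iS iK].
set S' := S :\ j; have jS' : j \notin S' by rewrite setD11.
have iS' : i \notin S' by rewrite inE negb_and iS orbT.
rewrite -(finset.setD1K jS) -/S'.
apply: le_trans (count_expect_exchange iS' jS' (pK _ _ iK jK)) (IH _ _ _).
  have -> : (i |: S') :\: K = (S :\: K) :\ j.
    by apply/setP => x; rewrite !inE; case: eqVneq => [->|]; rewrite ?iK ?andbF // andbCA.
  by move: ltSKn; rewrite (cardsD1 j) inE jS jK.
by rewrite cardsU1 iS' -eqSK (cardsD1 j S) jS.
Qed.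

End CountExpectationMonotone.

Lemma in_bigsetI (T : Type) (I : finType) (A : {set I}) (F : I -> set T) (t : T) :
  (\big[setI/setT]_(i in A) F i) t <-> (forall i, i \in A -> F i t).
Proof.
rewrite -bigcap_seq_cond; split=> [h i iA | h i /andP[_ iA]]; last exact: h.
by apply: h; rewrite /= mem_index_enum.
Qed.

Lemma card_ord_lt (m k : nat) : (k <= m)%N -> #|[set i : 'I_m | (i < k)%N]%SET| = k.
Proof.
move=> km; have widen_inj : injective (widen_ord km).
  by move=> x y /(congr1 val) /= /val_inj.
suff -> : [set i : 'I_m | (i < k)%N]%SET = widen_ord km @: 'I_k.
  by rewrite card_imset // card_ord.
apply/setP => i; rewrite inE; apply/idP/imsetP => [ik|[j _ ->]]; last exact: (ltn_ord j).
by exists (Ordinal ik) => //; apply: val_inj.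
Qed.

Definition log_mean (R : realType) (a b : R) (k n : nat) : R :=
  ln ((k%:R)^-1 * (k%:R * a + n%:R * (b - a))).

Lemma log_mean_leS (R : realType) (a b : R) (k n : nat) :
  0 < a -> a <= b -> (0 < k)%N -> log_mean a b k n <= log_mean a b k n.+1.
Proof.
move=> a0 ab k0; have ba0 : 0 <= b - a by rewrite subr_ge0.
have mean_gt0 j : 0 < (k%:R)^-1 * (k%:R * a + j%:R * (b - a)) :> R.
  by rewrite mulr_gt0 ?invr_gt0 ?ltr0n // ltr_pwDl ?mulr_ge0 ?mulr_gt0 ?ltr0n.
rewrite /log_mean ler_ln ?posrE // ler_wpM2l ?invr_ge0 ?ler0n // lerD2l.
by rewrite ler_wpM2r // ler_nat.
Qed.

Section IndependentEvents.
Variables (R : realType) (d : measure_display) (T : measurableType d).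
Variables (P : probability T R) (m : nat) (E : 'I_m -> set T).
Hypotheses (mE : forall i, measurable (E i)) (indep : mutually_independent P E).

Lemma probability_fineK A : measurable A -> (fine (P A))%:E = P A.
Proof. by move=> mA; rewrite fineK // fin_num_measure. Qed.

Lemma fine_probability_itv A : measurable A -> 0 <= fine (P A) <= 1.
Proof.
move=> mA; rewrite fine_ge0 ?measure_ge0 //= -lee_fin probability_fineK //.
exact: probability_le1.
Qed.

Let p i := fine (P (E i)).

Lemma mutually_independent_compl (A C : {set 'I_m}) : [disjoint A & C]%B ->
  P (\big[setI/setT]_(i in A) E i `&` \big[setI/setT]_(i in C) ~` E i) =
  (\prod_(i in A) p i * \prod_(i in C) (1 - p i))%:E.
Proof.
have [n] := ubnP #|C|; elim: n A C => // n IH A C ltCn dAC.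
have [->|[c cC]] := set_0Vmem C.
  rewrite !big_set0 setIT mulr1 indep -prodEFin.
  by apply: eq_bigr => i _; rewrite probability_fineK.
set C' := C :\ c.
have ltC'n : (#|C'| < n)%N by move: ltCn; rewrite (cardsD1 c) cC.
have cA : c \notin A by rewrite (disjointFl dAC cC).
have cC' : c \notin C' by rewrite setD11.
have dAC' : [disjoint A & C']%B by apply: disjointWr dAC; exact: subD1set.
have dcAC' : [disjoint c |: A & C']%B.
  rewrite finset.disjoints_subset finset.subUset finset.sub1set inE cC'.
  by rewrite -finset.disjoints_subset.
set X := \big[setI/setT]_(i in A) E i `&` \big[setI/setT]_(i in C') ~` E i.
have mX : measurable X.
  by apply: measurableI; apply: bigsetI_measurable => i _ //; exact: measurableC.
have XEc : X `&` E c =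
    \big[setI/setT]_(i in c |: A) E i `&` \big[setI/setT]_(i in C') ~` E i.
  by rewrite big_setU1 //= /X setIAC [_ `&` E c]setIC.
rewrite -(finset.setD1K cC) -/C' big_setU1 //= setIA setIAC -setDE -/X.
rewrite measureD ?(mE c) ?(le_lt_trans (probability_le1 P mX)) ?ltry //.
have PX := IH _ _ ltC'n dAC'; rewrite -/X in PX.
(* [measureD] states its result for [P] seen as a plain measure; converting
   back to [P]'s own instance lets [PX] rewrite. *)
rewrite -[LHS]/(P X - P (X `&` E c))%E XEc PX (IH _ _ ltC'n dcAC').
rewrite !big_setU1 //= -EFinB.
congr _%:E; rewrite /p; ring.
Qed.

Definition occurring (S : {set 'I_m}) (t : T) : {set 'I_m} := [set i in S | `[< E i t >]].

Definition outcome_event (S B : {set 'I_m}) : set T := [set t | occurring S t = B].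

Lemma outcome_eventE (S B : {set 'I_m}) : B \subset S ->
  outcome_event S B =
  \big[setI/setT]_(i in B) E i `&` \big[setI/setT]_(i in S :\: B) ~` E i.
Proof.
move=> sBS; apply/seteqP; split => t /=.
  move=> <-; split; apply/in_bigsetI => i; rewrite !inE.
    by case/andP=> _ /asboolP.
  by case/andP=> + iS; rewrite iS => /asboolPn.
case=> /in_bigsetI EB /in_bigsetI nES; apply/setP => i; rewrite inE.
have [iB|iB] := boolP (i \in B).
  by rewrite (fintype.subsetP sBS) //=; apply/asboolP; exact: EB.
case iS: (i \in S) => //=; apply/asboolPn; apply: nES.
by rewrite !inE iB iS.
Qed.

Lemma measurable_outcome_event (S B : {set 'I_m}) : measurable (outcome_event S B).
Proof.
have [sBS|nsBS] := boolP (B \subset S).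
  rewrite outcome_eventE //; apply: measurableI; apply: bigsetI_measurable => i _ //.
  exact: measurableC.
rewrite (_ : outcome_event S B = set0) //; apply/seteqP; split => // t /= eB.
by move: nsBS; rewrite -eB; apply/negP/negPn/fintype.subsetP => i; rewrite inE => /andP[].
Qed.

Lemma probability_outcome_event (S B : {set 'I_m}) : B \subset S ->
  P (outcome_event S B) = (outcome_weight p S B)%:E.
Proof.
move=> sBS; rewrite outcome_eventE // mutually_independent_compl //.
by rewrite finset.disjoints_subset; apply/fintype.subsetP => i iB; rewrite !inE iB.
Qed.

Lemma expectation_occurring (g : {set 'I_m} -> R) (S : {set 'I_m}) :
  ('E_P[fun t => g (occurring S t)] =
   \sum_(B in powerset S) (g B)%:E * P (outcome_event S B))%E.
Proof.
rewrite unlock.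
transitivity (\int[P]_t
    \sum_(B in powerset S) (g B)%:E * (\1_(outcome_event S B) t)%:E)%E.
  apply: eq_integral => t _.
  have occS : occurring S t \in powerset S.
    by rewrite powersetE; apply/fintype.subsetP => i; rewrite inE => /andP[].
  rewrite (bigD1 _ occS) /= indicE mem_set // mule1 big1 ?adde0 // => B /andP[_ nB].
  by rewrite indicE memNset ?mule0 //= => /esym/eqP; rewrite (negbTE nB).
rewrite integral_sum //; last first.
  by move=> B; apply: integrableZl => //; apply: integrable_indic => //;
     exact: measurable_outcome_event.
apply: eq_bigr => B _; rewrite integralZl //; last first.
  by apply: integrable_indic => //; exact: measurable_outcome_event.
by rewrite integral_indic ?setIT //; exact: measurable_outcome_event.
Qed.

Variables (a b : R).

Lemma sum_Xrv (S : {set 'I_m}) t : \sum_(i in S) Xrv E a b i t =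
  #|S|%:R * a + #|occurring S t|%:R * (b - a).
Proof.
transitivity (\sum_(i in S) (a + (`[< E i t >])%:R * (b - a))).
  apply: eq_bigr => i _; rewrite /Xrv.
  by case: ifP; rewrite /= ?mul1r ?mul0r ?addr0 // addrC subrK.
rewrite big_split /= sumr_const -mulr_suml mulr_natl; congr (_ + _ * _).
rewrite /occurring -sum1dep_card natr_sum big_mkcondr /=.
by apply: eq_bigr => i _; case: ifP.
Qed.

Lemma Vlog_count_expect (S : {set 'I_m}) :
  Vlog P E a b S = (count_expect p (log_mean a b #|S|) S)%:E.
Proof.
rewrite /Vlog (_ : (fun t => _) = fun t => log_mean a b #|S| #|occurring S t|).
  rewrite (expectation_occurring (fun B => log_mean a b #|S| #|B|)).
  rewrite /count_expect -sumEFin; apply: eq_bigr => B.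
  by rewrite powersetE => sBS; rewrite probability_outcome_event // EFinM.
by apply/funext => t; rewrite sum_Xrv.
Qed.

End IndependentEvents.

Theorem theorem4 (R : realType) (d : measure_display) (T : measurableType d)
  (P : probability T R) (m : nat) (E : 'I_m -> set T)
  (mE : forall i, measurable (E i))
  (indep : mutually_independent P E)
  (pdec : forall i j : 'I_m, (i <= j)%N -> (P (E j) <= P (E i))%E)
  (a b : R) (ha : 0 < a) (hab : a < b)
  (k : nat) (hk1 : (1 <= k)%N) (hkm : (k <= m)%N) :
  forall S : {set 'I_m}, #|S| = k ->
    (Vlog P E a b S <= Vlog P E a b [set i : 'I_m | (i < k)%N])%E.
Proof.
move=> S cardS; rewrite !Vlog_count_expect // cardS card_ord_lt // lee_fin.
apply: count_expect_le_top.
- by move=> i; apply: fine_probability_itv.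
- by move=> n; apply: log_mean_leS; rewrite // ltW.
- move=> i j; rewrite !inE => ik jk; rewrite -lee_fin !probability_fineK //.
  by apply: pdec; rewrite ltnW // (leq_trans ik) // leqNgt.
- by rewrite cardS card_ord_lt.
Qed.
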